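(* Let $v>0$, $N\ge2$, and consider the Becker–Döring coagulation process $CP(N)$ with rates $\psi(1,1)=2v$, $\psi(i,1)=\psi(1,i)=iv$ for $i>1$, and $\psi(i,j)=0$ if $\min\{i,j\}>1$, started from $(N,0,\dots,0)$. Then its distribution is Gibbsian, $\mathbb P(X_N^{(\rho)}(t)=\eta)=N!\prod_{k=1}^N a_{k,N}(t)^{n_k}/n_k!$, with $$a_{k,N}(t)=\sum_{i=0}^k m_{i,k}\,e^{-i(N-1)vt},\qquad k=1,\dots,N,\ t\ge0,$$ where $m_{k-1,k}=0$ for $k\ge1$, $m_{k,k}=\dfrac{(-1)^{k-1}}{k(N-1)^{k-1}}$ for $k\ge1$, and $m_{i,k}=\dfrac{(-1)^i(k-1)!}{i!\,(N-1)^{k-1}(k-i)(k-i-2)!}$ for $0\le i\le k-2$. Equivalently the coefficients satisfy $m_{0,1}=0$, $m_{1,1}=1$, $m_{i,k}=-\frac{(k-1)m_{i-1,k-1}}{i(N-1)}$ for $1\le i\le k$, $k\ge2$, and $m_{0,k}=-\sum_{i=1}^k m_{i,k}$.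
   Context: $CP(N)$ is the continuous-time Markov chain on partitions $\eta=(n_1,\dots,n_N)$ of $N$ ($n_k$ = number of clusters of size $k$, $\sum kn_k=N$) in which any two distinct clusters of sizes $i,j$ merge into one of size $i+j$ at rate $\psi(i,j)$; the transition $\eta\to\eta^{(i,j)}$ has rate $n_in_j\psi(i,j)$ for $i\ne j$ and $\frac{n_i(n_i-1)}2\psi(i,i)$ for $i=j$. These rates are of the form $\psi(i,j)=if(j)+jf(i)$ with $f(1)=v$, $f(i)=0$ for $i>1$. *)

From Stdlib Require Import Reals Arith Bool.
Open Scope R_scope.

Fixpoint sumR (n : nat) (f : nat -> R) : R :=
  match n with O => 0 | S m => sumR m f + f m end.
Fixpoint prodR (n : nat) (f : nat -> R) : R :=
  match n with O => 1 | S m => prodR m f * f m end.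
Fixpoint sumN (n : nat) (f : nat -> nat) : nat :=
  match n with O => O | S m => (sumN m f + f m)%nat end.

(* A configuration eta : nat -> nat, eta k = n_k = number of clusters of size k. *)
Definition is_state (N : nat) (eta : nat -> nat) : Prop :=
  (forall k, (k = 0%nat \/ (N < k)%nat) -> eta k = 0%nat) /\
  sumN N (fun k => (S k * eta (S k))%nat) = N.

Definition init_state (N : nat) : nat -> nat :=
  fun k => if Nat.eqb k 1 then N else 0%nat.

Definition fBD (v : R) (k : nat) : R := if Nat.eqb k 1 then v else 0.
Definition psi (v : R) (i j : nat) : R := INR i * fBD v j + INR j * fBD v i.

Definition rate (v : R) (eta : nat -> nat) (i j : nat) : R :=
  if Nat.eqb i j then INR (eta i) * (INR (eta i) - 1) / 2 * psi v i i
  else INR (eta i) * INR (eta j) * psi v i j.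

Definition add1 (eta : nat -> nat) (k : nat) : nat -> nat :=
  fun m => if Nat.eqb m k then S (eta m) else eta m.
Definition sub1 (eta : nat -> nat) (k : nat) : nat -> nat :=
  fun m => if Nat.eqb m k then Nat.pred (eta m) else eta m.

(* the configuration xi with xi^(i,j) = eta (valid when eta (i+j) >= 1) *)
Definition premerge (eta : nat -> nat) (i j : nat) : nat -> nat :=
  add1 (add1 (sub1 eta (i + j)%nat) i) j.

(* total jump rate out of eta: sum over unordered pairs 1 <= i <= j <= N *)
Definition out_rate (N : nat) (v : R) (eta : nat -> nat) : R :=
  sumR N (fun i' => sumR N (fun j' =>
    if Nat.leb i' j' then rate v eta (S i') (S j') else 0)).

Definition in_flow (N : nat) (v : R) (p : (nat -> nat) -> R) (eta : nat -> nat) : R :=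
  sumR N (fun i' => sumR N (fun j' =>
    let i := S i' in let j := S j' in
    if (Nat.leb i j && Nat.leb (i + j)%nat N && Nat.leb 1 (eta (i + j)%nat))%bool
    then p (premerge eta i j) * rate v (premerge eta i j) i j else 0)).

Definition mcoef (N i k : nat) : R :=
  if Nat.eqb i k then (-1) ^ (k - 1) / (INR k * INR (N - 1) ^ (k - 1))
  else if Nat.eqb (S i) k then 0
  else (-1) ^ i * INR (fact (k - 1)) /
       (INR (fact i) * INR (N - 1) ^ (k - 1) * INR (k - i) * INR (fact (k - i - 2))).

Definition acoef (N : nat) (v : R) (k : nat) (t : R) : R :=
  sumR (S k) (fun i => mcoef N i k * exp (- INR i * INR (N - 1) * v * t)).

Definition gibbs (N : nat) (v : R) (t : R) (eta : nat -> nat) : R :=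
  INR (fact N) * prodR N (fun k' =>
    acoef N v (S k') t ^ (eta (S k')) / INR (fact (eta (S k')))).

(* With x(t) = exp (-(N-1) v t) one has a_k(t) = A_k(x(t)) for polynomials A_k whose
   coefficient recursion reads A_(k+1)' = - k/(N-1) A_k, with A_1(y) = y; integrating gives
   A_k(y) = (1-y)^(k-1) (k-1+y) / (k (N-1)^(k-1)), so A_k(1) = 0 for k >= 2.  Hence the a_k
   solve the Becker-Doring system a_1' = -(N-1) v a_1, a_k' = (k-1) v a_1 a_(k-1) with
   a_k(0) = [k = 1], and differentiating the product formula shows that the Gibbs
   distribution solves the master equation with the initial law of p.  Since only monomers
   coagulate, the inflow into a state comes from states with one more cluster; so, by
   downward induction on the number of clusters, the difference between p and the Gibbs
   distribution at a state solves q' = - c q, q(0) = 0, and vanishes. *)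
From Stdlib Require Import Reals Arith Lia Lra Classical FunctionalExtensionality.
From Coquelicot Require Import Coquelicot.
Open Scope R_scope.

Lemma sumR_ext n f g : (forall k, (k < n)%nat -> f k = g k) -> sumR n f = sumR n g.
Proof.
  induction n as [|n IH]; intros H; simpl; auto.
  rewrite IH by (intros; apply H; lia). rewrite H by lia. reflexivity.
Qed.

Lemma sumR_eq0 n f : (forall k, (k < n)%nat -> f k = 0) -> sumR n f = 0.
Proof.
  induction n as [|n IH]; intros H; simpl; auto.
  rewrite IH by (intros; apply H; lia). rewrite H by lia. ring.
Qed.

Lemma sumR_scal n c f : sumR n (fun i => c * f i) = c * sumR n f.
Proof. induction n as [|n IH]; simpl; [|rewrite IH]; ring. Qed.

Lemma sumR_succ_l n f : sumR (S n) f = f O + sumR n (fun i => f (S i)).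
Proof. induction n as [|n IH]; simpl in *; [|rewrite IH]; ring. Qed.

Lemma sumR_first n f : (1 <= n)%nat -> sumR n f = f O + sumR (n - 1) (fun i => f (S i)).
Proof. intros hn. destruct n; [lia|]. rewrite sumR_succ_l, Nat.sub_1_r. reflexivity. Qed.

Lemma prodR_ext n f g : (forall k, (k < n)%nat -> f k = g k) -> prodR n f = prodR n g.
Proof.
  induction n as [|n IH]; intros H; simpl; auto.
  rewrite IH by (intros; apply H; lia). rewrite H by lia. reflexivity.
Qed.

Lemma prodR_update_scal n k c x f : (k < n)%nat ->
  prodR n (fun j => if j =? k then c * x else f j) =
  c * prodR n (fun j => if j =? k then x else f j).
Proof.
  induction n as [|n IH]; intros hk; [lia|]. simpl.
  destruct (Nat.eq_dec k n) as [->|ne].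
  - rewrite Nat.eqb_refl.
    assert (Hf : forall y, prodR n (fun j => if j =? n then y else f j) = prodR n f).
    { intros y. apply prodR_ext. intros j hj. rewrite (proj2 (Nat.eqb_neq j n)) by lia. reflexivity. }
    rewrite !Hf. ring.
  - rewrite IH, (proj2 (Nat.eqb_neq n k)) by lia. ring.
Qed.

Lemma sumN_ext n f g : (forall k, (k < n)%nat -> f k = g k) -> sumN n f = sumN n g.
Proof.
  induction n as [|n IH]; intros H; simpl; auto.
  rewrite IH by (intros; apply H; lia). rewrite H by lia. reflexivity.
Qed.

Lemma sumN_eq0 n f : (forall k, (k < n)%nat -> f k = O) -> sumN n f = O.
Proof.
  induction n as [|n IH]; intros H; simpl; auto.
  rewrite IH by (intros; apply H; lia). rewrite H by lia. reflexivity.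
Qed.

Lemma sumN_succ_l n f : sumN (S n) f = (f O + sumN n (fun i => f (S i)))%nat.
Proof. induction n as [|n IH]; simpl in *; [|rewrite IH]; lia. Qed.

Lemma sumN_first n f : (1 <= n)%nat -> sumN n f = (f O + sumN (n - 1) (fun i => f (S i)))%nat.
Proof. intros hn. destruct n; [lia|]. rewrite sumN_succ_l, Nat.sub_1_r. reflexivity. Qed.

Lemma sumN_le n f g : (forall k, (f k <= g k)%nat) -> (sumN n f <= sumN n g)%nat.
Proof. induction n as [|n IH]; simpl; intros H; auto. specialize (IH H). specialize (H n). lia. Qed.

Lemma INR_sumN n f : INR (sumN n f) = sumR n (fun i => INR (f i)).
Proof. induction n as [|n IH]; simpl; auto. rewrite plus_INR, IH. reflexivity. Qed.

Lemma derivable_pt_lim_ext f g x l :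
  (forall y, f y = g y) -> derivable_pt_lim f x l -> derivable_pt_lim g x l.
Proof. intros H. replace g with f; auto. apply functional_extensionality; auto. Qed.

Lemma derivable_pt_lim_polynomial n c y :
  derivable_pt_lim (fun y => sumR n (fun i => c i * y ^ i)) y
    (sumR n (fun i => c i * (INR i * y ^ pred i))).
Proof.
  induction n as [|n IH]; simpl.
  - apply derivable_pt_lim_const.
  - apply (derivable_pt_lim_plus _ (fun y => c n * y ^ n)); auto.
    apply (derivable_pt_lim_scal (fun y => y ^ n)), derivable_pt_lim_pow.
Qed.

Lemma derivable_pt_lim_prodR n (F : nat -> R -> R) (d : nat -> R) t :
  (forall j, (j < n)%nat -> derivable_pt_lim (F j) t (d j)) ->
  derivable_pt_lim (fun s => prodR n (fun j => F j s)) t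
    (sumR n (fun k => prodR n (fun j => if j =? k then d j else F j t))).
Proof.
  induction n as [|n IH]; intros HF; simpl.
  - apply derivable_pt_lim_const.
  - assert (Hn : prodR n (fun j => if j =? n then d j else F j t) = prodR n (fun j => F j t)).
    { apply prodR_ext. intros j hj. rewrite (proj2 (Nat.eqb_neq j n)) by lia. reflexivity. }
    rewrite Nat.eqb_refl, Hn.
    replace (sumR n _) with (sumR n (fun k => prodR n (fun j => if j =? k then d j else F j t)) * F n t).
    + apply (derivable_pt_lim_mult (fun s => prodR n (fun j => F j s)) (F n)).
      * apply IH. intros j hj. apply HF. lia.
      * apply HF. lia.
    + rewrite Rmult_comm, <- sumR_scal. apply sumR_ext. intros k hk.
      rewrite (proj2 (Nat.eqb_neq n k)) by lia. ring.
Qed.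

Definition right_continuous_at0 (f : R -> R) : Prop :=
  forall eps, 0 < eps -> exists delta, 0 < delta /\
    forall s, 0 <= s < delta -> Rabs (f s - f 0) < eps.

Lemma continuity_pt_right_continuous_at0 f : continuity_pt f 0 -> right_continuous_at0 f.
Proof.
  intros Hc eps heps.
  destruct (Hc eps heps) as [delta [hdelta Hd]].
  exists delta. split; auto. intros s hs.
  destruct (Req_dec s 0) as [->|ns].
  - rewrite Rminus_diag, Rabs_R0. exact heps.
  - apply Hd. split; [split; [exact I|auto]|].
    simpl. unfold Rdist. rewrite Rminus_0_r, Rabs_pos_eq; lra.
Qed.

Lemma right_continuous_at0_minus f g :
  right_continuous_at0 f -> right_continuous_at0 g -> right_continuous_at0 (fun s => f s - g s).
Proof.
  intros Hf Hg eps heps.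
  destruct (Hf (eps / 2)) as [d1 [hd1 Hd1]]; [lra|].
  destruct (Hg (eps / 2)) as [d2 [hd2 Hd2]]; [lra|].
  exists (Rmin d1 d2). split; [apply Rmin_glb_lt; auto|].
  intros s hs.
  assert (s < d1) by (apply Rlt_le_trans with (Rmin d1 d2); [lra|apply Rmin_l]).
  assert (s < d2) by (apply Rlt_le_trans with (Rmin d1 d2); [lra|apply Rmin_r]).
  specialize (Hd1 s ltac:(lra)). specialize (Hd2 s ltac:(lra)).
  replace (f s - g s - (f 0 - g 0)) with ((f s - f 0) + - (g s - g 0)) by ring.
  eapply Rle_lt_trans; [apply Rabs_triang|]. rewrite Rabs_Ropp. lra.
Qed.

Section LinearODE.
Variables (q : R -> R) (c : R).
Hypothesis Hq : forall t, 0 < t -> derivable_pt_lim q t (- c * q t).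

(* [q s * exp (c * s)] has zero derivative. *)
Lemma linear_ode_shift s t : 0 < s < t -> q t = q s * exp (c * (s - t)).
Proof.
  intros hs.
  destruct (MVT_cor2 (fun s => q s * exp (c * s)) (fun _ => 0) s t ltac:(lra)) as [z [Hz _]].
  - intros z hz.
    apply (derivable_pt_lim_ext (mult_fct q (fun s => exp (c * s)))); [reflexivity|].
    replace 0 with (- c * q z * exp (c * z) + q z * (c * exp (c * z))) by ring.
    apply (derivable_pt_lim_mult q (fun s => exp (c * s))); [apply Hq; lra|].
    apply (is_derive_Reals (fun s => exp (c * s))). auto_derive; auto. ring.
  - replace (c * (s - t)) with (c * s + - (c * t)) by ring.
    rewrite exp_plus, exp_Ropp.
    apply (Rmult_eq_reg_r (exp (c * t))); [|apply Rgt_not_eq, exp_pos].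
    field_simplify; [|apply Rgt_not_eq, exp_pos]. lra.
Qed.

Lemma linear_ode_bound s t : 0 < s < t -> Rabs (q t) <= Rabs (q s) * exp (Rabs c * t).
Proof.
  intros hs. rewrite (linear_ode_shift s t hs), Rabs_mult, (Rabs_pos_eq (exp _))
    by (left; apply exp_pos).
  apply Rmult_le_compat_l; [apply Rabs_pos|].
  assert (Hle : c * (s - t) <= Rabs c * t).
  { apply Rle_trans with (Rabs (c * (s - t))); [apply Rle_abs|].
    rewrite Rabs_mult, Rabs_minus_sym, (Rabs_pos_eq (t - s)) by lra.
    apply Rmult_le_compat_l; [apply Rabs_pos|lra]. }
  destruct Hle as [Hlt|Heq]; [left; apply exp_increasing, Hlt|rewrite Heq; right; reflexivity].
Qed.

Lemma linear_ode_unique : right_continuous_at0 q -> q 0 = 0 -> forall t, 0 <= t -> q t = 0.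
Proof.
  intros Hcont H0 t ht.
  destruct (Req_dec t 0) as [->|nt]; auto.
  destruct (Req_dec (q t) 0) as [|Hnz]; auto. exfalso.
  set (K := exp (Rabs c * t)).
  assert (HK : 0 < K) by apply exp_pos.
  destruct (Hcont (Rabs (q t) / K)) as [delta [hdelta Hd]].
  { apply Rdiv_lt_0_compat; auto. apply Rabs_pos_lt; auto. }
  set (s := Rmin (delta / 2) (t / 2)).
  assert (Hs : 0 < s < t /\ s < delta).
  { unfold s. repeat split.
    - apply Rmin_glb_lt; lra.
    - apply Rle_lt_trans with (t / 2); [apply Rmin_r|lra].
    - apply Rle_lt_trans with (delta / 2); [apply Rmin_l|lra]. }
  specialize (Hd s ltac:(lra)). rewrite H0, Rminus_0_r in Hd.
  pose proof (linear_ode_bound s t ltac:(lra)) as Hbound. fold K in Hbound.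
  assert (Rabs (q s) * K < Rabs (q t) / K * K) by (apply Rmult_lt_compat_r; auto).
  replace (Rabs (q t) / K * K) with (Rabs (q t)) in H by (field; lra).
  lra.
Qed.

End LinearODE.

Lemma INR_S_neq0 n : INR (S n) <> 0.
Proof. apply not_0_INR. lia. Qed.

Section CoefficientPolynomials.
Variable N : nat.
Hypothesis hN : (2 <= N)%nat.
Local Notation M := (INR (N - 1)).

Lemma INR_N_sub1_neq0 : M <> 0.
Proof. apply not_0_INR. lia. Qed.

Definition apoly k y := sumR (S k) (fun i => mcoef N i k * y ^ i).

Lemma apoly_1 y : apoly 1 y = y.
Proof. unfold apoly, mcoef. simpl. field. Qed.

Lemma mcoef_succ i k : (1 <= i <= S k)%nat -> (1 <= k)%nat ->
  INR i * mcoef N i (S k) = - (INR k / M) * mcoef N (pred i) k.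
Proof.
  intros hi hk. pose proof INR_N_sub1_neq0 as HM.
  destruct (Nat.eq_dec i (S k)) as [->|ne1].
  - unfold mcoef. rewrite !Nat.eqb_refl. simpl pred.
    destruct k as [|m]; [lia|].
    replace (S (S m) - 1)%nat with (S m) by lia. replace (S m - 1)%nat with m by lia.
    simpl pow. field. repeat split; auto using pow_nonzero, INR_S_neq0.
  - destruct (Nat.eq_dec i k) as [->|ne2].
    + unfold mcoef. destruct k as [|m]; [lia|].
      rewrite (proj2 (Nat.eqb_neq (S m) (S (S m)))), Nat.eqb_refl by lia.
      simpl pred. rewrite (proj2 (Nat.eqb_neq m (S m))), Nat.eqb_refl by lia. ring.
    + destruct i as [|i]; [lia|]. simpl pred.
      destruct (Nat.le_exists_sub (S (S i)) k) as [d [-> _]]; [lia|].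
      unfold mcoef.
      rewrite (proj2 (Nat.eqb_neq (S i) (S (d + S (S i))))) by lia.
      rewrite (proj2 (Nat.eqb_neq (S (S i)) (S (d + S (S i))))) by lia.
      rewrite (proj2 (Nat.eqb_neq i (d + S (S i)))) by lia.
      rewrite (proj2 (Nat.eqb_neq (S i) (d + S (S i)))) by lia.
      replace (S (d + S (S i)) - 1)%nat with (S (d + S i)) by lia.
      replace (d + S (S i) - 1)%nat with (d + S i)%nat by lia.
      replace (S (d + S (S i)) - S i)%nat with (S (S d)) by lia.
      replace (d + S (S i) - i)%nat with (S (S d)) by lia.
      replace (S (S d) - 2)%nat with d by lia.
      replace (d + S (S i))%nat with (S (d + S i)) by lia.
      rewrite fact_simpl, (fact_simpl i), !mult_INR. simpl pow.
      field. repeat split; auto using INR_fact_neq_0, INR_S_neq0, pow_nonzero.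
Qed.

Lemma derivable_pt_lim_apoly_succ k y : (1 <= k)%nat ->
  derivable_pt_lim (apoly (S k)) y (- (INR k / M) * apoly k y).
Proof.
  intros hk. replace (- (INR k / M) * apoly k y)
    with (sumR (S (S k)) (fun i => mcoef N i (S k) * (INR i * y ^ pred i))).
  { apply derivable_pt_lim_polynomial. }
  unfold apoly. rewrite sumR_succ_l, <- sumR_scal. simpl INR at 1.
  rewrite Rmult_0_l, Rmult_0_r, Rplus_0_l.
  apply sumR_ext. intros i hi.
  replace (mcoef N (S i) (S k) * (INR (S i) * y ^ pred (S i)))
    with (INR (S i) * mcoef N (S i) (S k) * y ^ i) by (simpl pred; ring).
  rewrite mcoef_succ by lia. simpl pred. ring.
Qed.

Definition apoly_closed k y := (1 - y) ^ (k - 1) * (INR k - 1 + y) / (INR k * M ^ (k - 1)).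

Lemma derivable_pt_lim_apoly_closed_succ m y : derivable_pt_lim (apoly_closed (S (S m))) y
  (- (INR (S m) / M) * apoly_closed (S m) y).
Proof.
  pose proof INR_N_sub1_neq0 as HM.
  apply is_derive_Reals. unfold apoly_closed.
  replace (S (S m) - 1)%nat with (S m) by lia. replace (S m - 1)%nat with m by lia.
  auto_derive; auto.
  change (match m with 0%nat => 1 | S _ => INR m + 1 end) with (INR (S m)).
  replace (1 + - y) with (1 - y) by ring.
  assert (INR (S m) + 1 <> 0) by (rewrite <- S_INR; apply INR_S_neq0).
  field. repeat split; auto using pow_nonzero, INR_S_neq0.
Qed.

Lemma apoly_closed_at0 m : apoly (S (S m)) 0 = apoly_closed (S (S m)) 0.
Proof.
  pose proof INR_N_sub1_neq0 as HM.
  unfold apoly. rewrite sumR_succ_l, sumR_eq0 by (intros; simpl; ring).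
  unfold mcoef, apoly_closed. simpl Nat.eqb. cbv iota.
  replace (S (S m) - 1)%nat with (S m) by lia. replace (S (S m) - 0)%nat with (S (S m)) by lia.
  replace (S (S m) - 2)%nat with m by lia.
  rewrite fact_simpl, mult_INR, Rminus_0_r, pow1, (S_INR (S m)). simpl.
  assert (INR (S m) + 1 <> 0) by (rewrite <- S_INR; apply INR_S_neq0).
  field. repeat split; auto using pow_nonzero, INR_S_neq0, INR_fact_neq_0.
Qed.

Lemma apoly_eq_closed k y : (1 <= k)%nat -> 0 <= y -> apoly k y = apoly_closed k y.
Proof.
  intros hk. revert y. induction k as [|k IH]; [lia|]. intros y hy.
  destruct k as [|m].
  - rewrite apoly_1. unfold apoly_closed. simpl. field.
  - destruct (Req_dec y 0) as [->|ny]; [apply apoly_closed_at0|].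
    destruct (MVT_cor2 (fun y => apoly (S (S m)) y - apoly_closed (S (S m)) y)
      (fun y => - (INR (S m) / M) * (apoly (S m) y - apoly_closed (S m) y)) 0 y)
      as [c [Hc1 Hc2]]; [lra| |].
    + intros c hc. rewrite Rmult_minus_distr_l.
      apply derivable_pt_lim_minus;
        [apply derivable_pt_lim_apoly_succ; lia|apply derivable_pt_lim_apoly_closed_succ].
    + rewrite (IH ltac:(lia) c), apoly_closed_at0 in Hc1 by lra. lra.
Qed.

Lemma apoly_at1 k : (2 <= k)%nat -> apoly k 1 = 0.
Proof.
  intros hk. rewrite apoly_eq_closed by (lia || lra). unfold apoly_closed.
  destruct k as [|[|k]]; try lia. rewrite Nat.sub_1_r. simpl. lra.
Qed.

End CoefficientPolynomials.

Section ClusterDensities.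
Variables (N : nat) (v : R).
Hypothesis hN : (2 <= N)%nat.
Local Notation M := (INR (N - 1)).

Lemma acoef_apoly k t : acoef N v k t = apoly N k (exp (- (M * v * t))).
Proof.
  unfold acoef, apoly. apply sumR_ext. intros i _. f_equal.
  rewrite <- Rpower_pow by apply exp_pos. unfold Rpower. rewrite ln_exp. f_equal. ring.
Qed.

Lemma acoef_1 t : acoef N v 1 t = exp (- (M * v * t)).
Proof. rewrite acoef_apoly. apply apoly_1. Qed.

Lemma acoef_1_at0 : acoef N v 1 0 = 1.
Proof. rewrite acoef_1, Rmult_0_r, Ropp_0. apply exp_0. Qed.

Lemma acoef_at0 k : (2 <= k)%nat -> acoef N v k 0 = 0.
Proof. intros hk. rewrite acoef_apoly, Rmult_0_r, Ropp_0, exp_0. apply apoly_at1; auto. Qed.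

Definition acoef_deriv k t :=
  if k =? 1 then - (M * v) * acoef N v 1 t
  else INR (k - 1) * v * acoef N v 1 t * acoef N v (k - 1) t.

Lemma derivable_pt_lim_acoef k t : (1 <= k)%nat ->
  derivable_pt_lim (fun s => acoef N v k s) t (acoef_deriv k t).
Proof.
  intros hk. unfold acoef_deriv.
  apply (derivable_pt_lim_ext (comp (apoly N k) (fun s => exp (- (M * v * s))))).
  { intros s. symmetry. apply acoef_apoly. }
  assert (Hx : derivable_pt_lim (fun s => exp (- (M * v * s))) t
                 (- (M * v) * exp (- (M * v * t)))).
  { apply (is_derive_Reals (fun s => exp (- (M * v * s)))). auto_derive; auto. ring. }
  destruct k as [|[|k]]; [lia| |].
  - simpl Nat.eqb. cbv iota. rewrite acoef_1.
    apply (derivable_pt_lim_ext (fun s => exp (- (M * v * s)))); [|exact Hx].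
    intros s. unfold comp. rewrite apoly_1. reflexivity.
  - replace (S (S k) =? 1) with false by reflexivity.
    replace (INR (S (S k) - 1) * v * acoef N v 1 t * acoef N v (S (S k) - 1) t)
      with (- (INR (S k) / M) * apoly N (S k) (exp (- (M * v * t))) *
            (- (M * v) * exp (- (M * v * t)))).
    + apply derivable_pt_lim_comp; [exact Hx|].
      apply derivable_pt_lim_apoly_succ; auto. lia.
    + replace (S (S k) - 1)%nat with (S k) by lia. rewrite acoef_1, acoef_apoly.
      field. apply INR_N_sub1_neq0; auto.
Qed.

End ClusterDensities.

Lemma add1_sub1 e k : (1 <= e k)%nat -> add1 (sub1 e k) k = e.
Proof.
  intros h. apply functional_extensionality. intros m. unfold add1, sub1.
  destruct (Nat.eqb_spec m k) as [->|]; [lia|reflexivity].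
Qed.

Section GibbsWeights.
Variables (n : nat) (a : nat -> R -> R).

Definition weight t (e : nat -> nat) :=
  prodR n (fun k' => a (S k') t ^ e (S k') / INR (fact (e (S k')))).

Lemma weight_add1 t e k : (1 <= k <= n)%nat ->
  weight t (add1 e k) * INR (S (e k)) = a k t * weight t e.
Proof.
  intros hk. destruct k as [|k]; [lia|]. unfold weight.
  set (F := fun j => a (S j) t ^ e (S j) / INR (fact (e (S j)))).
  rewrite (prodR_ext n _ (fun j => if j =? k then (a (S k) t / INR (S (e (S k)))) * F k else F j)).
  - rewrite prodR_update_scal by lia.
    rewrite (prodR_ext n (fun j => if j =? k then F k else F j) F).
    + field. apply INR_S_neq0.
    + intros j _. destruct (Nat.eqb_spec j k) as [->|]; reflexivity.
  - intros j _. unfold add1, F. destruct (Nat.eqb_spec j k) as [->|ne].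
    + rewrite Nat.eqb_refl, fact_simpl, mult_INR. simpl pow.
      field. split; [apply INR_fact_neq_0|apply INR_S_neq0].
    + rewrite (proj2 (Nat.eqb_neq (S j) (S k))) by lia. reflexivity.
Qed.

Lemma weight_sub1 t e k : (1 <= k <= n)%nat -> (1 <= e k)%nat ->
  weight t e * INR (e k) = a k t * weight t (sub1 e k).
Proof.
  intros hk he. rewrite <- weight_add1, add1_sub1 by auto.
  unfold sub1. rewrite Nat.eqb_refl, Nat.succ_pred_pos by lia. reflexivity.
Qed.

Lemma derivable_pt_lim_weight (d : nat -> R) t e :
  (forall k, (1 <= k <= n)%nat -> derivable_pt_lim (a k) t (d k)) ->
  derivable_pt_lim (fun s => weight s e) t
    (sumR n (fun k' => if 1 <=? e (S k') then d (S k') * weight t (sub1 e (S k')) else 0)).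
Proof.
  intros Hd. unfold weight.
  set (F := fun j s => a (S j) s ^ e (S j) / INR (fact (e (S j)))).
  set (dF := fun j =>
    INR (e (S j)) * a (S j) t ^ pred (e (S j)) * d (S j) / INR (fact (e (S j)))).
  replace (sumR n _) with (sumR n (fun k => prodR n (fun j => if j =? k then dF j else F j t))).
  { apply (derivable_pt_lim_prodR n F). intros j hj.
    apply (derivable_pt_lim_ext
      (mult_real_fct (/ INR (fact (e (S j)))) (comp (fun y => y ^ e (S j)) (a (S j))))).
    { intros s. unfold mult_real_fct, comp, F, Rdiv. ring. }
    unfold dF, Rdiv. rewrite (Rmult_comm _ (/ _)).
    apply derivable_pt_lim_scal, derivable_pt_lim_comp;
      [apply Hd; lia|apply derivable_pt_lim_pow]. }
  apply sumR_ext. intros k hk.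
  rewrite (prodR_ext n _ (fun j => if j =? k then dF k else F j t))
    by (intros j _; destruct (Nat.eqb_spec j k) as [->|]; reflexivity).
  unfold dF. destruct (e (S k)) as [|m] eqn:Em; simpl Nat.leb; cbv iota.
  - rewrite Rmult_0_l, !Rmult_0_l, Rdiv_0_l, <- (Rmult_0_l 1), prodR_update_scal by lia.
    ring.
  - replace (INR (S m) * a (S k) t ^ pred (S m) * d (S k) / INR (fact (S m)))
      with (d (S k) * (a (S k) t ^ m / INR (fact m))).
    + rewrite prodR_update_scal by lia. f_equal. apply prodR_ext. intros j _.
      unfold F, sub1. destruct (Nat.eqb_spec j k) as [->|ne].
      * rewrite Nat.eqb_refl, Em. reflexivity.
      * rewrite (proj2 (Nat.eqb_neq (S j) (S k))) by lia. reflexivity.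
    + rewrite fact_simpl, mult_INR. simpl pred.
      field. split; [apply INR_fact_neq_0|apply INR_S_neq0].
Qed.

End GibbsWeights.

Lemma sumN_weighted_add1 n (w : nat -> nat) e k : (1 <= k <= n)%nat ->
  sumN n (fun k' => (w k' * add1 e k (S k'))%nat) =
  (sumN n (fun k' => (w k' * e (S k'))%nat) + w (k - 1))%nat.
Proof.
  induction n as [|n IH]; intros hk; [lia|]. simpl.
  destruct (Nat.eq_dec k (S n)) as [->|ne].
  - rewrite (sumN_ext n _ (fun k' => (w k' * e (S k'))%nat))
      by (intros j hj; unfold add1; rewrite (proj2 (Nat.eqb_neq (S j) (S n))) by lia; reflexivity).
    unfold add1. rewrite Nat.eqb_refl, Nat.sub_1_r, Nat.mul_succ_r. simpl pred. lia.
  - rewrite IH by lia. unfold add1 at 1. rewrite (proj2 (Nat.eqb_neq (S n) k)) by lia. ring.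
Qed.

Lemma sumN_weighted_sub1 n (w : nat -> nat) e k : (1 <= k <= n)%nat -> (1 <= e k)%nat ->
  (sumN n (fun k' => (w k' * sub1 e k (S k'))%nat) + w (k - 1))%nat =
  sumN n (fun k' => (w k' * e (S k'))%nat).
Proof. intros hk he. rewrite <- sumN_weighted_add1, add1_sub1 by auto. reflexivity. Qed.

Definition cluster_count N (e : nat -> nat) := sumN N (fun k' => e (S k')).

Lemma cluster_count_weighted N e :
  cluster_count N e = sumN N (fun k' => ((fun _ => 1%nat) k' * e (S k'))%nat).
Proof. apply sumN_ext. intros. simpl. lia. Qed.

Lemma cluster_count_le N e : is_state N e -> (cluster_count N e <= N)%nat.
Proof.
  intros [_ Hmass]. unfold cluster_count. rewrite <- Hmass at 2.
  apply sumN_le. intros k. simpl. lia.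
Qed.

Lemma premerge_state N e i j : is_state N e -> (1 <= i)%nat -> (1 <= j)%nat ->
  (i + j <= N)%nat -> (1 <= e (i + j))%nat ->
  is_state N (premerge e i j) /\ cluster_count N (premerge e i j) = S (cluster_count N e).
Proof.
  intros [Hsupp Hmass] hi hj hij he. unfold premerge. split; [split|].
  - intros k hk. unfold add1, sub1.
    destruct (Nat.eqb_spec k j); [lia|]. destruct (Nat.eqb_spec k i); [lia|].
    destruct (Nat.eqb_spec k (i + j)); [lia|]. apply Hsupp; auto.
  - rewrite !(sumN_weighted_add1 N S) by lia.
    pose proof (sumN_weighted_sub1 N S e (i + j) ltac:(lia) he). lia.
  - rewrite !cluster_count_weighted, !(sumN_weighted_add1 N (fun _ => 1%nat)) by lia.
    pose proof (sumN_weighted_sub1 N (fun _ => 1%nat) e (i + j) ltac:(lia) he) as H.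
    cbv beta in H. lia.
Qed.

Lemma state_monomers N e : (1 <= N)%nat -> is_state N e ->
  (forall k, (2 <= k <= N)%nat -> e k = O) -> e = init_state N.
Proof.
  intros hN [Hsupp Hmass] Hk. apply functional_extensionality. intros m. unfold init_state.
  destruct (Nat.eqb_spec m 1) as [->|ne].
  - rewrite sumN_first in Hmass by lia.
    rewrite sumN_eq0 in Hmass by (intros i hi; rewrite Hk by lia; lia). lia.
  - destruct (Nat.le_gt_cases 2 m); [destruct (Nat.le_gt_cases m N)|];
      [apply Hk|apply Hsupp|apply Hsupp]; lia.
Qed.

Lemma gibbs_weight N v t e : gibbs N v t e = INR (fact N) * weight N (acoef N v) t e.
Proof. reflexivity. Qed.

Lemma gibbs_at0_init N v : (2 <= N)%nat -> gibbs N v 0 (init_state N) = 1.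
Proof.
  intros hN. unfold gibbs.
  rewrite (prodR_ext N _ (fun k' => if k' =? 0 then / INR (fact N) * 1 else 1)).
  - rewrite prodR_update_scal by lia.
    rewrite (prodR_ext N _ (fun _ => 1)) by (intros k _; destruct (k =? 0); reflexivity).
    assert (Hone : forall n, prodR n (fun _ => 1) = 1)
      by (induction n as [|n IH]; simpl; [|rewrite IH]; ring).
    rewrite Hone. field. apply INR_fact_neq_0.
  - intros [|k] _; unfold init_state; simpl Nat.eqb; cbv iota.
    + rewrite acoef_1_at0, pow1 by auto. field. apply INR_fact_neq_0.
    + simpl. field.
Qed.

Lemma gibbs_at0_other N v e : (2 <= N)%nat -> is_state N e -> e <> init_state N ->
  gibbs N v 0 e = 0.
Proof.
  intros hN He Hne.
  destruct (classic (exists k, (2 <= k <= N)%nat /\ (1 <= e k)%nat)) as [[k [hk hek]]|Hno].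
  - pose proof (weight_sub1 N (acoef N v) 0 e k ltac:(lia) hek) as H.
    rewrite acoef_at0, Rmult_0_l in H by (auto || lia).
    apply Rmult_integral in H. destruct H as [H|H].
    + rewrite gibbs_weight, H. ring.
    + exfalso. apply (not_0_INR (e k)); [lia|exact H].
  - exfalso. apply Hne, state_monomers; [lia|exact He|].
    intros k hk. destruct (e k) eqn:Ek; [reflexivity|].
    exfalso. apply Hno. exists k. split; [exact hk|lia].
Qed.

Lemma rate_ge2 v e i j : (2 <= i)%nat -> (2 <= j)%nat -> rate v e i j = 0.
Proof.
  intros hi hj. unfold rate, psi, fBD.
  rewrite (proj2 (Nat.eqb_neq i 1)), (proj2 (Nat.eqb_neq j 1)) by lia.
  destruct (i =? j); ring.
Qed.

Lemma rate_premerge_monomer v s j : (1 <= j)%nat ->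
  rate v (add1 (add1 s 1) j) 1 j = v * INR j * INR (S (add1 s 1 j)) * INR (S (s 1%nat)).
Proof.
  intros hj. unfold rate, psi, fBD, add1. destruct j as [|[|j]]; [lia| |]; simpl Nat.eqb; cbv iota.
  - rewrite (S_INR (S (s 1%nat))). simpl INR. field.
  - rewrite Nat.eqb_refl. simpl INR. ring.
Qed.

(* Only a monomer can be one of the two merging clusters, since [psi i j = 0] for [i, j >= 2]. *)
Lemma in_flow_monomer N v p e : (1 <= N)%nat ->
  in_flow N v p e = sumR (N - 1) (fun j' =>
    if 1 <=? e (S (S j'))
    then p (premerge e 1 (S j')) * rate v (premerge e 1 (S j')) 1 (S j') else 0).
Proof.
  intros hN. unfold in_flow. rewrite sumR_first by lia.
  rewrite (sumR_eq0 (N - 1)), Rplus_0_r.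
  2:{ intros i' _. apply sumR_eq0. intros j' _. cbv zeta.
      destruct (S (S i') <=? S j') eqn:Hij; [|reflexivity].
      apply Nat.leb_le in Hij. cbn [andb].
      destruct (_ && _)%bool; [apply Rmult_eq_0_compat_l, rate_ge2; lia|reflexivity]. }
  replace N with (S (N - 1)) at 1 by lia.
  change (sumR (S (N - 1)) ?f) with (sumR (N - 1) f + f (N - 1)%nat). cbv beta.
  rewrite (proj2 (Nat.leb_gt (1 + S (N - 1)) N)) by lia. rewrite Bool.andb_false_r. cbn [andb].
  rewrite Rplus_0_r.
  apply sumR_ext. intros j' hj'. cbv zeta.
  replace (1 + S j')%nat with (S (S j')) by lia.
  rewrite (proj2 (Nat.leb_le (S (S j')) N)) by lia. reflexivity.
Qed.

Section MasterEquation.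
Variables (N : nat) (v : R).
Hypothesis hN : (2 <= N)%nat.
Local Notation M := (INR (N - 1)).
Local Notation W := (weight N (acoef N v)).

Lemma gibbs_in_flow t e :
  in_flow N v (gibbs N v t) e = INR (fact N) * sumR (N - 1) (fun j' =>
    if 1 <=? e (S (S j'))
    then v * INR (S j') * acoef N v 1 t * acoef N v (S j') t * W t (sub1 e (S (S j')))
    else 0).
Proof.
  rewrite in_flow_monomer, <- sumR_scal by lia. apply sumR_ext. intros j' hj'.
  destruct (1 <=? e (S (S j'))); [|ring].
  unfold premerge. replace (1 + S j')%nat with (S (S j')) by lia.
  set (s := sub1 e (S (S j'))).
  rewrite rate_premerge_monomer, gibbs_weight by lia.
  pose proof (weight_add1 N (acoef N v) t (add1 s 1) (S j') ltac:(lia)) as Hj.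
  pose proof (weight_add1 N (acoef N v) t s 1 ltac:(lia)) as H1.
  transitivity (INR (fact N) * v * INR (S j') * (acoef N v (S j') t * W t (add1 s 1)) *
                INR (S (s 1%nat))); [rewrite <- Hj; ring|].
  transitivity (INR (fact N) * v * INR (S j') * acoef N v (S j') t *
                (W t (add1 s 1) * INR (S (s 1%nat)))); [ring|].
  rewrite H1. ring.
Qed.

Lemma out_rate_state e : is_state N e -> out_rate N v e = v * INR (e 1%nat) * M.
Proof.
  intros [_ Hmass]. unfold out_rate. rewrite sumR_first by lia.
  rewrite (sumR_eq0 (N - 1)), Rplus_0_r.
  2:{ intros i' _. apply sumR_eq0. intros j' _.
      destruct (S i' <=? j') eqn:Hij; [|reflexivity].
      apply Nat.leb_le in Hij. apply rate_ge2; lia. }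
  rewrite sumR_first by lia. cbv beta. simpl Nat.leb. cbv iota.
  rewrite (sumR_ext (N - 1) _ (fun j' => INR (e 1%nat) * v * (INR (S (S j')) * INR (e (S (S j')))))).
  2:{ intros j' _. unfold rate, psi, fBD. simpl Nat.eqb. cbv iota. simpl INR. ring. }
  rewrite sumR_scal.
  apply (f_equal INR) in Hmass. rewrite sumN_first, plus_INR, INR_sumN in Hmass by lia.
  rewrite (sumR_ext (N - 1) _ (fun j' => INR (S (S j')) * INR (e (S (S j'))))) in Hmass
    by (intros; apply mult_INR).
  rewrite mult_INR, minus_INR in * by lia.
  unfold rate, psi, fBD. simpl Nat.eqb. cbv iota. simpl INR in *.
  nra.
Qed.

Lemma derivable_pt_lim_gibbs e t : is_state N e ->
  derivable_pt_lim (fun s => gibbs N v s e) t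
    (in_flow N v (gibbs N v t) e - gibbs N v t e * out_rate N v e).
Proof.
  intros He. rewrite gibbs_in_flow, out_rate_state, gibbs_weight by auto.
  apply (derivable_pt_lim_ext (mult_real_fct (INR (fact N)) (fun s => W s e))); [reflexivity|].
  replace (_ - _) with (INR (fact N) * sumR N (fun k' =>
    if 1 <=? e (S k') then acoef_deriv N v (S k') t * W t (sub1 e (S k')) else 0)).
  { apply derivable_pt_lim_scal, (derivable_pt_lim_weight N (acoef N v) (fun k => acoef_deriv N v k t)).
    intros k hk. apply derivable_pt_lim_acoef; lia. }
  assert (Hmono : (if 1 <=? e 1%nat then acoef_deriv N v 1 t * W t (sub1 e 1) else 0)
                  = - (M * v) * INR (e 1%nat) * W t e).
  { destruct (1 <=? e 1%nat) eqn:H1.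
    - apply Nat.leb_le in H1. unfold acoef_deriv. simpl Nat.eqb. cbv iota.
      rewrite Rmult_assoc, <- (weight_sub1 N (acoef N v) t e 1) by lia. ring.
    - apply Nat.leb_gt in H1. replace (e 1%nat) with O by lia. simpl. ring. }
  rewrite sumR_first, Hmono by lia.
  rewrite (sumR_ext (N - 1) (fun k' => if 1 <=? e (S (S k')) then _ else 0)
    (fun k' => if 1 <=? e (S (S k'))
      then v * INR (S k') * acoef N v 1 t * acoef N v (S k') t * W t (sub1 e (S (S k')))
      else 0)).
  - ring.
  - intros k' _. unfold acoef_deriv. replace (S (S k') =? 1) with false by reflexivity.
    replace (S (S k') - 1)%nat with (S k') by lia.
    destruct (1 <=? e (S (S k'))); ring.
Qed.

End MasterEquation.

Section Uniqueness.
Variables (v : R) (N : nat) (p : R -> (nat -> nat) -> R).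
Hypothesis hN : (2 <= N)%nat.
Hypothesis hfwd : forall eta, is_state N eta -> forall t, 0 < t ->
  derivable_pt_lim (fun s => p s eta) t (in_flow N v (p t) eta - p t eta * out_rate N v eta).
Hypothesis hcont : forall eta, is_state N eta -> right_continuous_at0 (fun s => p s eta).
Hypothesis hinit1 : p 0 (init_state N) = 1.
Hypothesis hinit0 : forall eta, is_state N eta -> eta <> init_state N -> p 0 eta = 0.

Lemma p_eq_gibbs_of_premerge eta : is_state N eta ->
  (forall i j, (1 <= i)%nat -> (1 <= j)%nat -> (i + j <= N)%nat -> (1 <= eta (i + j))%nat ->
     forall t, 0 <= t -> p t (premerge eta i j) = gibbs N v t (premerge eta i j)) ->
  forall t, 0 <= t -> p t eta = gibbs N v t eta.
Proof.
  intros He IH.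
  assert (Hin : forall t, 0 <= t -> in_flow N v (p t) eta = in_flow N v (gibbs N v t) eta).
  { intros t ht. rewrite !in_flow_monomer by lia. apply sumR_ext. intros j' hj'.
    destruct (1 <=? eta (S (S j'))) eqn:Hj; [|reflexivity].
    apply Nat.leb_le in Hj. rewrite IH by (auto; lia). reflexivity. }
  intros t ht. apply Rminus_diag_uniq.
  apply (linear_ode_unique (fun s => p s eta - gibbs N v s eta) (out_rate N v eta)); auto.
  - intros s hs.
    replace (- out_rate N v eta * (p s eta - gibbs N v s eta))
      with ((in_flow N v (p s) eta - p s eta * out_rate N v eta) -
            (in_flow N v (gibbs N v s) eta - gibbs N v s eta * out_rate N v eta))
      by (rewrite Hin by lra; ring).
    apply derivable_pt_lim_minus; [apply hfwd|apply derivable_pt_lim_gibbs]; auto.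
  - apply right_continuous_at0_minus; [apply hcont, He|].
    apply continuity_pt_right_continuous_at0, derivable_continuous_pt.
    eexists. apply derivable_pt_lim_gibbs; auto.
  - destruct (classic (eta = init_state N)) as [->|Hne].
    + rewrite hinit1, gibbs_at0_init by auto. ring.
    + rewrite hinit0, gibbs_at0_other by auto. ring.
Qed.

Lemma p_eq_gibbs_clusters d eta : is_state N eta -> (N <= cluster_count N eta + d)%nat ->
  forall t, 0 <= t -> p t eta = gibbs N v t eta.
Proof.
  revert eta. induction d as [|d IH]; intros eta He Hd;
    apply p_eq_gibbs_of_premerge; auto; intros i j hi hj hij he;
    destruct (premerge_state N eta i j He hi hj hij he) as [Hs Hcount].
  - pose proof (cluster_count_le N _ Hs). lia.
  - apply IH; auto. lia.
Qed.

End Uniqueness.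

Theorem mainTheorem8 (v : R) (N : nat) (hv : 0 < v) (hN : (2 <= N)%nat)
  (p : R -> (nat -> nat) -> R)
  (hfwd : forall eta, is_state N eta -> forall t, 0 < t ->
      derivable_pt_lim (fun s => p s eta) t
        (in_flow N v (p t) eta - p t eta * out_rate N v eta))
  (hcont : forall eta, is_state N eta -> forall eps, 0 < eps ->
      exists delta, 0 < delta /\
        forall s, 0 <= s < delta -> Rabs (p s eta - p 0 eta) < eps)
  (hinit1 : p 0 (init_state N) = 1)
  (hinit0 : forall eta, is_state N eta -> eta <> init_state N -> p 0 eta = 0) :
  forall t eta, 0 <= t -> is_state N eta -> p t eta = gibbs N v t eta.
Proof.
  intros t eta ht He.
  apply (p_eq_gibbs_clusters v N p hN hfwd hcont hinit1 hinit0 N eta He); [lia|exact ht].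
Qed.
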